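(* Let $m\ge2$. Let $\mathcal K_{\rm sym}$ be the set of maps $K:\{0,1\}^m\to\{\pm1\}$ with $K(x_1,x_2,\dots,x_m)=K(1-x_1,x_2,\dots,x_m)$ for all $x$. Let $\mathcal Z$ be the set of pairs $(a,q)$, $q\in\{0,1\}^m$, $a=(a_1,\dots,a_m)$ with $a_i:X_i\to\{\pm1\}$, such that there is $K\in\mathcal K_{\rm sym}$ with $a_i=K|_{X_i}$ for all $i$, and $\prod_{x\in X_1}a_1(x)=(-1)^{q_1}$. Define $P(a|q)=2^{-(2^{m-1}-1)}$ if $(a,q)\in\mathcal Z$ and $P(a|q)=0$ otherwise. Then $P$ is a no-signalling correlation (for each $q$, $P(\cdot|q)$ is a probability distribution, and for each $i$, $\sum_{a_i}P(a|q)$ does not depend on $q_i$), and every $(a,q)$ with $P(a|q)>0$ wins $\mathrm{HC}_m$; consequently $P$ wins $\mathrm{HC}_m$ with probability $1$.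
   Context: The $m$-player Hypercube game $\mathrm{HC}_m$: the question $q=(q_1,\dots,q_m)\in\{0,1\}^m$ is uniformly random and player $i$ receives $q_i$. Player $i$ must answer a function $a_i:X_i\to\{+1,-1\}$ where $X_i=\{x\in\{0,1\}^m: x_i=q_i\}$. The players win iff (Parity) $\prod_{x\in X_1}a_1(x)=(-1)^{q_1}$ and $\prod_{x\in X_i}a_i(x)=1$ for all $i\ge2$; and (Consistency) $a_i(x)=a_j(x)$ for all $i\ne j$ and all $x\in X_i\cap X_j$. *)

From HB Require Import structures.
From mathcomp Require Import all_boot all_order all_algebra.
Set Implicit Arguments. Unset Strict Implicit. Unset Printing Implicit Defensive.
Import Order.TTheory GRing.Theory Num.Theory.
Local Open Scope ring_scope.

(* Players are indexed by 'I_m; player 1 of the paper is the index with value 0. *)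
Definition point (m : nat) := {ffun 'I_m -> bool}.
Definition question (m : nat) := {ffun 'I_m -> bool}.

(* Signs: the boolean b encodes (-1)^b, so false = +1 and true = -1. *)
Definition sgn (b : bool) : int := (-1) ^+ b.

Definition in_X m (i : 'I_m) (q : question m) (x : point m) : bool := x i == q i.

(* Player i's answer a_i : X_i -> {+-1} is
   encoded as a function on all of {0,1}^m whose values outside X_i are
   forced to +1 (false); see [well_formed].  This gives a bijection between
   the encoded answers with [well_formed q a] and the genuine answer tuples. *)
Definition answer (m : nat) := {ffun 'I_m -> {ffun point m -> bool}}.

Definition well_formed m (q : question m) (a : answer m) : bool :=
  [forall i, forall x, ~~ in_X i q x ==> ~~ a i x].

Definition flip1 m (x : point m) : point m :=
  [ffun j : 'I_m => if val j == 0%N then ~~ x j else x j].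

Definition Ksym m (K : {ffun point m -> bool}) : bool :=
  [forall x, K x == K (flip1 x)].

Definition inZ m (q : question m) (a : answer m) : bool :=
  [&& well_formed q a,
      [exists K : {ffun point m -> bool},
         Ksym K && [forall i, forall x, in_X i q x ==> (a i x == K x)]]
    & [forall i : 'I_m, (val i == 0%N) ==>
         ((\prod_(x : point m | in_X i q x) sgn (a i x)) == sgn (q i))]].

Definition P m (q : question m) (a : answer m) : rat :=
  if inZ q a then ((2 ^ (2 ^ (m - 1) - 1))%N%:R)^-1 else 0.

Definition wins m (q : question m) (a : answer m) : bool :=
  [forall i : 'I_m,
     (\prod_(x : point m | in_X i q x) sgn (a i x)) ==
       (if val i == 0%N then sgn (q i) else 1)]
  && [forall i : 'I_m, forall j : 'I_m, (i != j) ==>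
        [forall x, (in_X i q x && in_X j q x) ==> (a i x == a j x)]].

Definition upd m (a : answer m) (i : 'I_m) (f : {ffun point m -> bool}) : answer m :=
  [ffun j => if j == i then f else a j].

(* A pair (a, q) lies in Z exactly when a is the restriction to the sets X_i of a
   flip1-symmetric map K with the prescribed parity on X_1, and K is recovered from a
   since a symmetric map is determined by its values on X_1.  Toggling K on an orbit
   {w, flip1 w} with w in X_1 keeps K symmetric and changes its parity on X_1, so
   exactly half of the 2^(2^(m-1)) symmetric maps qualify and P(.|q) is uniform on Z.
   For i <> 1 the set X_i is a union of flip1-orbits, so every symmetric map has even
   parity on it: the support of P wins.  For no-signalling, the players other than i
   see all of K except, when i = 1, the orbit of one point w of X_1, and the parity
   condition recovers K(w); hence at most one answer of player i completes the others
   into Z, and a completion for q yields one for any q' differing from q only at i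
   (toggling K at the orbit of w if the parity requirement changed). *)

From mathcomp Require Import all_boot all_order all_algebra.
Import Order.TTheory GRing.Theory Num.Theory.
Local Open Scope ring_scope.

Lemma sgn_addb a b : sgn (a (+) b) = sgn a * sgn b.
Proof. by case: a; case: b; rewrite /sgn /= ?expr0 ?expr1 ?mulr1 ?mul1r ?mulrNN. Qed.

Lemma sgn_inj : injective sgn.
Proof. by case; case; rewrite /sgn /= ?expr0 ?expr1. Qed.

Lemma prod_sgn (T : finType) (D : pred T) (F : T -> bool) :
  \prod_(x | D x) sgn (F x) = sgn (\big[addb/false]_(x | D x) F x).
Proof. by rewrite (big_morph sgn sgn_addb (erefl : sgn false = 1)). Qed.

Lemma flip1K {m} : involutive (@flip1 m).
Proof. by move=> x; apply/ffunP=> j; rewrite !ffunE; case: (_ == _); rewrite ?negbK. Qed.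

Lemma upd_same {m} (a : answer m) i f : upd a i f i = f.
Proof. by rewrite ffunE eqxx. Qed.

Lemma upd_other {m} (a : answer m) i f j : j != i -> upd a i f j = a j.
Proof. by rewrite ffunE => /negbTE->. Qed.

Lemma invr_natr_mulrn (F : numFieldType) (n : nat) : (0 < n)%N -> (n%:R : F)^-1 *+ n = 1.
Proof. by move=> n_gt0; rewrite -[_ *+ n]mulr_natr mulVf // pnatr_eq0 -lt0n. Qed.

Lemma P_ge0 m (q : question m) (a : answer m) : 0 <= P q a.
Proof. by rewrite /P; case: ifP; rewrite ?invr_ge0. Qed.

Section HypercubeCorrelation.

Variable m : nat.
Hypothesis m_gt0 : (0 < m)%N.

Let i0 : 'I_m := Ordinal m_gt0.
Local Notation bfun := {ffun point m -> bool}.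

Lemma flip1_first (x : point m) : flip1 x i0 = ~~ x i0.
Proof. by rewrite ffunE. Qed.

Lemma flip1_other (x : point m) j : j != i0 -> flip1 x j = x j.
Proof.
move=> ne_j0; rewrite ffunE; case: eqP => // j_0.
by case/eqP: ne_j0; apply: val_inj.
Qed.

Lemma in_X_flip1 j (q : question m) x : j != i0 -> in_X j q (flip1 x) = in_X j q x.
Proof. by move=> ne_j0; rewrite /in_X flip1_other. Qed.

Lemma Ksym_flip1 {K : bfun} : Ksym K -> forall x, K (flip1 x) = K x.
Proof. by move=> /forallP sK x; apply/esym/eqP. Qed.

Lemma Ksym_eq_on_half (b : bool) (K1 K2 : bfun) : Ksym K1 -> Ksym K2 ->
  (forall x : point m, x i0 = b -> K1 x = K2 x) -> K1 = K2.
Proof.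
move=> sK1 sK2 eqK; apply/ffunP=> x.
have [/eqP|xb] := boolP (x i0 == b); first exact: eqK.
rewrite -(Ksym_flip1 sK1 x) -(Ksym_flip1 sK2 x); apply: eqK.
by rewrite flip1_first; move: xb; case: (x i0); case: b.
Qed.

Lemma xorsum_flip1_invariant (D : pred (point m)) (F : point m -> bool) :
  (forall x, D (flip1 x) = D x) -> (forall x, F (flip1 x) = F x) ->
  \big[addb/false]_(x | D x) F x = false.
Proof.
move=> Dflip Fflip; rewrite (bigID (fun x : point m => x i0)) /=.
rewrite [X in _ (+) X](reindex_inj (can_inj flip1K)) /=.
under [X in _ (+) X]eq_bigl do rewrite Dflip flip1_first negbK.
under [X in _ (+) X]eq_bigr do rewrite Fflip.
exact: addbb.
Qed.

Definition toggle (w : point m) (K : bfun) : bfun :=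
  [ffun x => if (x == w) || (x == flip1 w) then ~~ K x else K x].

Lemma toggleK w : involutive (toggle w).
Proof.
by move=> K; apply/ffunP=> x; rewrite !ffunE; case: (_ || _); rewrite ?negbK.
Qed.

Lemma toggle_id (w : point m) (K : bfun) (x : point m) :
  x != w -> x != flip1 w -> toggle w K x = K x.
Proof. by rewrite ffunE => /negbTE-> /negbTE->. Qed.

Lemma Ksym_toggle w K : Ksym K -> Ksym (toggle w K).
Proof.
move=> sK; apply/forallP=> x; rewrite !ffunE (Ksym_flip1 sK x).
have flip1_eq y : (flip1 x == y) = (x == flip1 y).
  by rewrite -{1}(flip1K y) (inj_eq (can_inj flip1K)).
by rewrite !flip1_eq flip1K orbC.
Qed.

Definition restrict (q : question m) (K : bfun) : answer m :=
  [ffun i => [ffun x => in_X i q x && K x]].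

Definition parity_ok (q : question m) (K : bfun) : bool :=
  \big[addb/false]_(x | in_X i0 q x) K x == q i0.

Lemma parity_ok_toggle (w : point m) (q : question m) (K : bfun) : w i0 = q i0 ->
  parity_ok q (toggle w K) = ~~ parity_ok q K.
Proof.
move=> wq; have wX : in_X i0 q w by rewrite /in_X wq.
rewrite /parity_ok (bigD1 w) // [in RHS](bigD1 w) //= ffunE eqxx /=.
rewrite (eq_bigr K) => [|x /andP[xX ne_xw]]; last first.
  apply: toggle_id => //; apply: contraTneq xX => ->.
  by rewrite /in_X flip1_first wq; case: (q i0).
by case: (K w); case: (\big[addb/false]_(_ | _) _); case: (q i0).
Qed.

Lemma inZP (q : question m) (a : answer m) :
  reflect (exists2 K, Ksym K && parity_ok q K & a = restrict q K) (inZ q a).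
Proof.
apply: (iffP and3P) => [[/forallP wf /existsP[K /andP[sK /forallP aK]] /forallP par_a]|].
  have aKX i x : in_X i q x -> a i x = K x.
    by move=> xX; move/forallP: (aK i) => /(_ x) /implyP /(_ xX) /eqP.
  exists K.
    rewrite sK /parity_ok; move/implyP: (par_a i0) => /(_ isT).
    by rewrite prod_sgn => /eqP /sgn_inj <-; apply/eqP/eq_bigr => x /aKX.
  apply/ffunP=> i; apply/ffunP=> x; rewrite !ffunE.
  case xX: (in_X i q x); first exact: aKX.
  by move/forallP: (wf i) => /(_ x) /implyP; rewrite xX => /(_ isT) /negbTE.
case=> K /andP[sK parK] ->; split.
- by apply/forallP=> i; apply/forallP=> x; rewrite !ffunE; case: (in_X i q x).
- apply/existsP; exists K; rewrite sK /=.
  by apply/forallP=> i; apply/forallP=> x; rewrite !ffunE; case: in_X; rewrite /= ?eqxx.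
- apply/forallP=> i; apply/implyP=> i_0; have -> : i = i0 by apply/val_inj/eqP.
  rewrite prod_sgn -(eqP parK); apply/eqP; congr sgn.
  by apply: eq_bigr => x xX; rewrite !ffunE xX.
Qed.

Lemma restrict_inj_Ksym (q : question m) (K1 K2 : bfun) : Ksym K1 -> Ksym K2 ->
  restrict q K1 = restrict q K2 -> K1 = K2.
Proof.
move=> sK1 sK2 eqK; apply: (Ksym_eq_on_half (q i0)) => // x xq.
have := congr1 (fun a : answer m => a i0 x) eqK.
by rewrite !ffunE /in_X xq eqxx.
Qed.

Lemma card_half_cube : #|[set x : point m | ~~ x i0]| = (2 ^ m.-1)%N.
Proof.
set H := [set x : point m | ~~ x i0].
have flipH : ~: H = @flip1 m @: H.
  apply/setP=> x; rewrite !inE negbK; apply/idP/imsetP => [x0|[y]].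
    by exists (flip1 x); rewrite ?flip1K // inE flip1_first x0.
  by rewrite inE => y0 ->; rewrite flip1_first.
have := cardsC H; rewrite flipH card_imset ?card_ffun ?card_bool ?card_ord; last first.
  exact: can_inj flip1K.
have -> : (2 ^ m = (2 ^ m.-1).*2)%N by rewrite -{1}(prednK m_gt0) expnS mul2n.
by rewrite addnn => /double_inj.
Qed.

Lemma card_Ksym : #|[set K : bfun | Ksym K]| = (2 ^ (2 ^ m.-1))%N.
Proof.
pose restrict_half (K : bfun) : bfun := [ffun x : point m => ~~ x i0 && K x].
rewrite -(card_in_imset (f := restrict_half)); last first.
  move=> K1 K2; rewrite !inE => sK1 sK2 eqK; apply: (Ksym_eq_on_half false) => // x x0.
  by have := congr1 (fun g : bfun => g x) eqK; rewrite !ffunE x0.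
rewrite -card_half_cube -[in RHS]card_bool -(card_pffun_on false).
apply: eq_card => g; apply/imsetP/pffun_onP => [[K _ ->]|[/supportP g0 _]].
  by split=> [|//]; apply/supportP => x; rewrite inE negbK ffunE => ->.
exists [ffun x : point m => g (if x i0 then flip1 x else x)].
  by rewrite inE; apply/forallP=> x; rewrite !ffunE /= flip1K; case: (x i0).
by apply/ffunP=> x; rewrite !ffunE; case x0: (x i0) => //=; rewrite g0 // inE x0.
Qed.

Lemma card_Ksym_parity (q : question m) :
  #|[set K : bfun | Ksym K && parity_ok q K]| = (2 ^ (2 ^ m.-1).-1)%N.
Proof.
set good := [set K : bfun | Ksym K && parity_ok q K].
have bad : [set K | Ksym K] :\: [set K | parity_ok q K] = toggle q @: good.
  apply/setP=> K; rewrite !inE; apply/andP/imsetP => [[badK sK]|[K0]].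
    exists (toggle q K); last by rewrite toggleK.
    by rewrite inE Ksym_toggle // parity_ok_toggle.
  rewrite inE => /andP[sK0 parK0] ->.
  by rewrite parity_ok_toggle // parK0 Ksym_toggle.
have := cardsID [set K : bfun | parity_ok q K] [set K : bfun | Ksym K].
rewrite bad card_imset ?card_Ksym; last exact: can_inj (toggleK q).
have -> : [set K | Ksym K] :&: [set K | parity_ok q K] = good.
  by apply/setP=> K; rewrite !inE.
rewrite -(prednK (expn_gt0 2 m.-1)) expnS addnn -mul2n => /eqP.
by rewrite eqn_pmul2l // => /eqP.
Qed.

Lemma card_inZ (q : question m) : #|[set a | inZ q a]| = (2 ^ (2 ^ (m - 1) - 1))%N.
Proof.
have -> : [set a | inZ q a] = restrict q @: [set K : bfun | Ksym K && parity_ok q K].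
  apply/setP=> a; rewrite inE; apply/inZP/imsetP => [[K KZ ->]|[K]].
    by exists K; rewrite ?inE.
  by rewrite inE => KZ ->; exists K.
rewrite card_in_imset ?card_Ksym_parity ?subn1 // => K1 K2.
by rewrite !inE => /andP[sK1 _] /andP[sK2 _]; apply: restrict_inj_Ksym.
Qed.

Lemma sum_P (q : question m) : \sum_a P q a = 1.
Proof.
rewrite /P -big_mkcond /= sumr_const.
rewrite (eq_card (B := [set a | inZ q a])) => [|a]; last by rewrite inE.
by rewrite card_inZ invr_natr_mulrn // expn_gt0.
Qed.

Lemma inZ_wins (q : question m) (a : answer m) : inZ q a -> wins q a.
Proof.
case/inZP=> K /andP[sK parK] ->; apply/andP; split.
  apply/forallP=> i; rewrite prod_sgn (eq_bigr K) => [|x xX]; last by rewrite !ffunE xX.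
  have [->|ne_i0] := eqVneq i i0; first by rewrite (eqP parK).
  have -> : (val i == 0%N) = false by apply: contraNF ne_i0 => /eqP i_0; apply/eqP/val_inj.
  rewrite xorsum_flip1_invariant // => x; first exact: in_X_flip1.
  exact: Ksym_flip1.
apply/forallP=> i; apply/forallP=> j; apply/implyP=> _; apply/forallP=> x.
by apply/implyP=> /andP[xi xj]; rewrite !ffunE xi xj.
Qed.

Lemma P_gt0_wins (q : question m) (a : answer m) : 0 < P q a -> wins q a.
Proof. by rewrite /P; case: ifP => [/inZ_wins //|_]; rewrite ltxx. Qed.

Lemma sum_wins_P (q : question m) : \sum_(a | wins q a) P q a = 1.
Proof.
rewrite big_mkcond -(sum_P q); apply: eq_bigr => a _.
by case: ifPn => // lose; rewrite /P; case: ifPn => // /inZ_wins; rewrite (negbTE lose).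
Qed.

(* The only point with first coordinate b seen by none of the players j <> i0. *)
Definition opposite (b : bool) (q : question m) : point m :=
  [ffun j => if j == i0 then b else ~~ q j].

Lemma opposite_first b (q : question m) : opposite b q i0 = b.
Proof. by rewrite ffunE eqxx. Qed.

Lemma in_X_opposite b (q : question m) j : j != i0 -> in_X j q (opposite b q) = false.
Proof. by move=> ne_j0; rewrite /in_X ffunE (negbTE ne_j0); case: (q j). Qed.

Lemma opposite_unique b (q : question m) (x : point m) :
  x i0 = b -> (forall j, j != i0 -> ~~ in_X j q x) -> x = opposite b q.
Proof.
move=> xb outx; apply/ffunP=> j; rewrite ffunE; have [->|ne_j0] := eqVneq j i0 => //.
by move: (outx j ne_j0); rewrite /in_X; case: (x j); case: (q j).
Qed.

Lemma Ksym_eq_from_others (i : 'I_m) (q : question m) (K1 K2 : bfun) :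
  Ksym K1 -> Ksym K2 -> parity_ok q K1 -> parity_ok q K2 ->
  (forall j, j != i -> forall x, in_X j q x -> K1 x = K2 x) -> K1 = K2.
Proof.
move=> sK1 sK2 parK1 parK2 eqK; apply: (Ksym_eq_on_half (q i0)) => // x xq.
have [i_0|ne_i0] := eqVneq i i0; last by apply: (eqK i0); rewrite 1?eq_sym // /in_X xq.
pose w := opposite (q i0) q.
have eqK_off_w y : in_X i0 q y -> y != w -> K1 y = K2 y.
  move=> yX ne_yw; case/boolP: [exists j, (j != i) && in_X j q y].
    by case/existsP=> j /andP[ne_ji yj]; apply: eqK yj.
  rewrite negb_exists => /forallP outy; case/eqP: ne_yw.
  apply: opposite_unique => [|j ne_j0]; first exact/eqP.
  by move: (outy j); rewrite i_0 ne_j0.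
have [->|ne_xw] := eqVneq x w; last by apply: eqK_off_w; rewrite // /in_X xq.
have wX : in_X i0 q w by rewrite /in_X opposite_first.
move: parK1 parK2; rewrite /parity_ok !(bigD1 w wX) /=.
rewrite (eq_bigr K2) => [/eqP<- /eqP/addIb //|y /andP[]]; exact: eqK_off_w.
Qed.

Lemma upd_inZ_inj (q : question m) (a : answer m) i f1 f2 :
  inZ q (upd a i f1) -> inZ q (upd a i f2) -> f1 = f2.
Proof.
case/inZP=> K1 /andP[sK1 parK1] eK1; case/inZP=> K2 /andP[sK2 parK2] eK2.
suff eqK : K1 = K2 by rewrite -(upd_same a i f1) -(upd_same a i f2) eK1 eK2 eqK.
apply: (Ksym_eq_from_others i q) => // j ne_ji x xX.
have := congr1 (fun b : answer m => b j x) eK1.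
have := congr1 (fun b : answer m => b j x) eK2.
by rewrite /= !upd_other // !ffunE xX /= => <- <-.
Qed.

Lemma exists_upd_inZ_transfer (i : 'I_m) (q q' : question m) (a : answer m) :
  (forall j, j != i -> q j = q' j) ->
  (exists f, inZ q (upd a i f)) -> exists f, inZ q' (upd a i f).
Proof.
move=> eq_q [f /inZP[K /andP[sK parK] eK]].
pose w := opposite (q' i0) q.
pose K' := if parity_ok q' K then K else toggle w K.
have sK' : Ksym K' by rewrite /K'; case: ifP => _; rewrite ?Ksym_toggle.
have parK' : parity_ok q' K'.
  by rewrite /K'; case: ifPn => // badK; rewrite parity_ok_toggle ?opposite_first.
have eq_restrict j : j != i -> restrict q K j = restrict q' K' j.
  move=> ne_ji; apply/ffunP=> x; rewrite !ffunE {2}/in_X -eq_q // -/(in_X j q x).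
  rewrite /K'; case: ifPn => // badK; case xX: (in_X j q x) => //=.
  have ne_j0 : j != i0.
    apply: contraNneq badK => j_0; move: ne_ji; rewrite j_0 => /eq_q q_0.
    by move: parK; rewrite /parity_ok /in_X q_0.
  rewrite toggle_id //; apply: contraTneq xX => ->.
    by rewrite in_X_opposite.
  by rewrite in_X_flip1 // in_X_opposite.
exists (restrict q' K' i); apply/inZP; exists K'; first by rewrite sK' parK'.
apply/ffunP=> j; have [->|ne_ji] := eqVneq j i; first by rewrite upd_same.
by rewrite upd_other // -eq_restrict // -eK upd_other.
Qed.

Lemma sum_P_upd (i : 'I_m) (q : question m) (a : answer m) :
  \sum_f P q (upd a i f) =
  if [exists f, inZ q (upd a i f)] then ((2 ^ (2 ^ (m - 1) - 1))%N%:R)^-1 else 0.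
Proof.
case: existsP => [[f0 Zf0]|noZ].
  rewrite (bigD1 f0) //= {1}/P Zf0 big1 ?addr0 // => f ne_ff0.
  by rewrite /P; case: ifP => // Zf; case/eqP: ne_ff0; apply: upd_inZ_inj Zf Zf0.
by apply: big1 => f _; rewrite /P; case: ifP => // Zf; case: noZ; exists f.
Qed.

Lemma no_signalling (i : 'I_m) (q q' : question m) (a : answer m) :
  (forall j, j != i -> q j = q' j) ->
  \sum_f P q (upd a i f) = \sum_f P q' (upd a i f).
Proof.
move=> eq_q; rewrite !sum_P_upd; congr (if _ then _ else _).
apply/existsP/existsP; apply: exists_upd_inZ_transfer => // j ne_ji.
by rewrite eq_q.
Qed.

End HypercubeCorrelation.

Theorem mainTheorem4 (m : nat) (hm : (2 <= m)%N) :
  (forall (q : question m) (a : answer m), 0 <= P q a) /\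
  (forall q : question m, \sum_(a : answer m) P q a = 1) /\
  (forall (i : 'I_m) (q q' : question m),
     (forall j : 'I_m, j != i -> q j = q' j) ->
     forall a : answer m,
       \sum_(f : {ffun point m -> bool}) P q (upd a i f) =
       \sum_(f : {ffun point m -> bool}) P q' (upd a i f)) /\
  (forall (q : question m) (a : answer m), 0 < P q a -> wins q a) /\
  (\sum_(q : question m) ((2 ^ m)%N%:R)^-1 *
      (\sum_(a : answer m | wins q a) P q a) = 1 :> rat).
Proof.
have m_gt0 : (0 < m)%N := ltnW hm.
split; first exact: P_ge0.
split; first exact: sum_P.
split; first by move=> i q q' eq_q a; apply: no_signalling.
split; first exact: P_gt0_wins.
under eq_bigr do rewrite sum_wins_P // mulr1.
by rewrite sumr_const card_ffun card_bool card_ord invr_natr_mulrn // expn_gt0.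
Qed.
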